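(* For each $\sigma\in\{132,213,312,3142\}$ and every $n\ge 0$, we have $F_n(321,\sigma)=S_n(231,321,\sigma)$.
   Context: A permutation of length $n$ is a rearrangement of $[n]$; $S_n$ is the set of all of them. A permutation $\pi$ avoids a classical pattern $p\in S_k$ if no subsequence of $\pi$ of length $k$ is order-isomorphic to $p$. A Fishburn permutation is a permutation $\pi=\pi_1\cdots\pi_n$ for which there are no indices $i<j$ with $\pi_j<\pi_i<\pi_{i+1}$ and $\pi_i=\pi_j+1$. $F_n(\sigma_1,\dots,\sigma_k)$ denotes the set of Fishburn permutations of length $n$ avoiding each of the classical patterns $\sigma_1,\dots,\sigma_k$, and $S_n(\sigma_1,\dots,\sigma_k)$ the set of all permutations of length $n$ avoiding each $\sigma_i$. *)

From mathcomp Require Import all_boot all_order all_fingroup.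
Set Implicit Arguments. Unset Strict Implicit. Unset Printing Implicit Defensive.

(* Permutations of [n] are elements of {perm 'I_n}; position i (0-based) holds
   value s i (0-based), i.e. pi_{i+1} = s i + 1. Shifting by one does not
   affect relative order. *)

(* A classical pattern is given in one-line notation as a list of naturals,
   e.g. [:: 3; 2; 1] for 321. *)

Definition contains (n : nat) (s : {perm 'I_n}) (p : seq nat) : bool :=
  [exists f : {ffun 'I_(size p) -> 'I_n},
     [forall a : 'I_(size p), forall b : 'I_(size p),
        ((a < b)%N ==> (f a < f b)%N) &&
        ((s (f a) < s (f b))%N == (nth 0 p a < nth 0 p b)%N)]].

Definition avoids (n : nat) (s : {perm 'I_n}) (p : seq nat) : bool :=
  ~~ contains s p.

Definition fishburn (n : nat) (s : {perm 'I_n}) : bool :=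
  ~~ [exists i : 'I_n, exists j : 'I_n, exists i1 : 'I_n,
       [&& (i < j)%N, (val i1 == (val i).+1),
           (s j < s i)%N, (s i < s i1)%N & (val (s i) == (s j).+1)]].

Definition F_set (n : nat) (ps : seq (seq nat)) : {set {perm 'I_n}} :=
  [set s : {perm 'I_n} | fishburn s && all (avoids s) ps].

Definition S_set (n : nat) (ps : seq (seq nat)) : {set {perm 'I_n}} :=
  [set s : {perm 'I_n} | all (avoids s) ps].

From mathcomp Require Import all_boot all_order all_fingroup.
From mathcomp Require Import zify.
Set Implicit Arguments. Unset Strict Implicit. Unset Printing Implicit Defensive.

(* Inclusion S ⊆ F: a Fishburn violation is an occurrence of 231 whose first
   two letters are adjacent, so 231-avoiders are Fishburn.
   Inclusion F ⊆ S: each of 132, 213, 312 occurs in 3142, so avoiding sigma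
   implies avoiding 3142.  For a Fishburn permutation avoiding 321 and 3142,
   a 231 occurrence yields one whose first two letters are adjacent
   (an [adjacent231] configuration).  Locating the value one below its first
   letter produces another such configuration with a smaller first letter,
   so by well-founded induction on that letter none exists. *)

Definition occurs (n : nat) (w : nat -> nat) (p : seq nat) : Prop :=
  exists f : nat -> nat,
    [/\ forall a, a < size p -> f a < n,
        forall a b, a < b -> b < size p -> f a < f b &
        forall a b, a < size p -> b < size p ->
          (w (f a) < w (f b)) = (nth 0 p a < nth 0 p b)].

Definition fishburn_word (n : nat) (w : nat -> nat) : Prop :=
  forall i j, i < j -> j < n -> w j < w i < w i.+1 -> w i <> (w j).+1.

(* Checking that explicit positions xs form an occurrence: after case
   analysis on the letter indices only linear comparisons remain. *)
Ltac occurrence_at xs :=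
  exists (nth 0 xs); split;
  [ case=> [|[|[|[|?]]]]
  | case=> [|[|[|[|?]]]] [|[|[|[|?]]]]
  | case=> [|[|[|[|?]]]] [|[|[|[|?]]]] ];
  rewrite //=; try apply/idP/idP; lia.

Lemma ascent_between (f : nat -> nat) x y :
  x < y -> f x < f y -> exists2 i, x <= i < y & f i < f i.+1.
Proof.
elim: y => [//|y IHy] lt_xy lt_f.
have [lt_xy'|] := ltnP x y; last first.
  move=> le_yx; have eq_xy : x = y by lia.
  by rewrite eq_xy in lt_f *; exists y; rewrite ?leqnn.
have [asc_y|desc_y] := ltnP (f y) (f y.+1); first by exists y => //; lia.
by have [i /andP[le_xi lt_iy] asc_i] := IHy lt_xy' (leq_trans lt_f desc_y);
  exists i => //; lia.
Qed.

Section Words.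

Variables (n : nat) (w : nat -> nat).

Lemma occurs231 x y z :
  x < y -> y < z -> z < n -> w z < w x < w y -> occurs n w [:: 2; 3; 1].
Proof. by move=> *; occurrence_at [:: x; y; z]. Qed.

Lemma occurs321 x y z :
  x < y -> y < z -> z < n -> w z < w y < w x -> occurs n w [:: 3; 2; 1].
Proof. by move=> *; occurrence_at [:: x; y; z]. Qed.

Lemma occurs3142 x y z t : x < y -> y < z -> z < t -> t < n ->
  w y < w t < w x -> w x < w z -> occurs n w [:: 3; 1; 4; 2].
Proof. by move=> *; occurrence_at [:: x; y; z; t]. Qed.

Lemma occurs231_positions : occurs n w [:: 2; 3; 1] ->
  exists x y z, [/\ x < y, y < z, z < n & w z < w x < w y].
Proof.
case=> f [f_lt f_incr f_ord]; exists (f 0), (f 1), (f 2).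
by split; rewrite ?f_ord ?f_incr ?f_lt.
Qed.

Lemma occurs_sigma_of_3142 (sigma : seq nat) :
  sigma \in [:: [:: 1; 3; 2]; [:: 2; 1; 3]; [:: 3; 1; 2]; [:: 3; 1; 4; 2]] ->
  occurs n w [:: 3; 1; 4; 2] -> occurs n w sigma.
Proof.
move=> sigma_in [f [f_lt f_incr f_ord]].
have: [/\ f 0 < f 1, f 1 < f 2, f 2 < f 3, f 3 < n &
          [/\ w (f 1) < w (f 3), w (f 3) < w (f 0) & w (f 0) < w (f 2)]].
  by split; rewrite ?f_ord ?f_incr ?f_lt.
move: (f 0) (f 1) (f 2) (f 3) => x y z t [? ? ? ? [? ? ?]].
move: sigma_in; rewrite !inE => /or4P[] /eqP ->.
- by occurrence_at [:: y; z; t].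
- by occurrence_at [:: x; y; z].
- by occurrence_at [:: x; y; t].
- by occurrence_at [:: x; y; z; t].
Qed.

(* A Fishburn violation is a 231 occurrence, so 231-avoiders are Fishburn. *)
Lemma fishburn_of_avoid231 : ~ occurs n w [:: 2; 3; 1] -> fishburn_word n w.
Proof.
move=> avoid231 i j lt_ij lt_jn /andP[lt_ji lt_ii1] _; apply: avoid231.
have [eq_j|ne_j] := eqVneq j i.+1; first by rewrite eq_j in lt_ji; lia.
by apply: (occurs231 (x := i) (y := i.+1) (z := j)) => //; [lia | apply/andP].
Qed.

Hypothesis w_range : forall x, x < n -> w x < n.
Hypothesis w_inj : forall x y, x < n -> y < n -> w x = w y -> x = y.
Hypothesis w_onto : forall v, v < n -> exists2 j, j < n & w j = v.

Hypothesis avoid321 : ~ occurs n w [:: 3; 2; 1].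
Hypothesis avoid3142 : ~ occurs n w [:: 3; 1; 4; 2].
Hypothesis w_fishburn : fishburn_word n w.

Lemma below_between x y c k : x < y -> y < c -> c < n -> w c < w x < w y ->
  x <= k <= y -> w c < w k.
Proof.
move=> lt_xy lt_yc lt_cn /andP[lt_cx lt_xy'] /andP[le_xk le_ky].
have [-> //|ne_kx] := eqVneq k x.
have [->|ne_ky] := eqVneq k y; first exact: ltn_trans lt_cx lt_xy'.
rewrite ltnNge leq_eqVlt negb_or; apply/andP; split.
  by apply/eqP => /w_inj; lia.
by apply/negP => lt_kc; apply: avoid3142;
  apply: (occurs3142 (x := x) (y := k) (z := y) (t := c)) => //; lia.
Qed.

Definition adjacent231 (i c : nat) : Prop :=
  [/\ i.+1 < c, c < n & w c < w i < w i.+1].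

(* Between the first two letters of a 231 occurrence there is an ascent, and
   by [below_between] it starts an adjacent 231 with the same last letter. *)
Lemma adjacent231_of_231 :
  occurs n w [:: 2; 3; 1] -> exists i c, adjacent231 i c.
Proof.
case/occurs231_positions => x [y [c [lt_xy lt_yc lt_cn /andP[lt_cx lt_xy']]]].
have [i /andP[le_xi lt_iy] asc_i] := ascent_between lt_xy lt_xy'.
exists i, c; split; [lia | done | apply/andP; split=> //].
by apply: (below_between lt_xy lt_yc) => //; [apply/andP | lia].
Qed.

(* Descent: the value w i - 1 sits at some j < i (j > i would violate
   Fishburn), and j starts an adjacent 231 with the same last letter
   (otherwise j, j+1, c is a 321). *)
Lemma adjacent231_descent i c :
  adjacent231 i c -> exists j, adjacent231 j c /\ w j < w i.
Proof.
case=> lt_i1c lt_cn /andP[lt_ci asc_i].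
have lt_win : w i < n by apply: w_range; lia.
have [j lt_jn w_j] : exists2 j, j < n & w j = (w i).-1 by apply: w_onto; lia.
have lt_ji : j < i.
  rewrite ltnNge leq_eqVlt; apply/negP => /orP[/eqP eq_ij|lt_ij].
    by rewrite -eq_ij in w_j; lia.
  by apply: (w_fishburn lt_ij lt_jn); [apply/andP; split; lia | lia].
have lt_cj : w c < w j.
  have ne_cj : w c <> w j by move/w_inj; lia.
  lia.
have below := below_between (x := j) (y := i.+1) (c := c).
have asc_j : w j < w j.+1.
  have [-> |ne_j1] := eqVneq j.+1 i; first lia.
  rewrite ltnNge leq_eqVlt negb_or; apply/andP; split.
    by apply/eqP => /w_inj; lia.
  apply/negP => lt_j1j; apply: avoid321.
  apply: (occurs321 (x := j) (y := j.+1) (z := c)); try lia.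
  by rewrite lt_j1j andbT; apply: below; try lia; apply/andP; split; lia.
by exists j; split; [split=> //; [lia | apply/andP] | lia].
Qed.

Lemma no_adjacent231 i c : ~ adjacent231 i c.
Proof.
elim/ltn_ind: (w i) {-2}i (erefl (w i)) => v IHv {}i w_i adj.
have [j [adj_j lt_ji]] := adjacent231_descent adj.
by apply: (IHv (w j) _ j); rewrite -?w_i.
Qed.

Lemma avoid231 : ~ occurs n w [:: 2; 3; 1].
Proof. by case/adjacent231_of_231 => i [c]; apply: no_adjacent231. Qed.

End Words.

Definition extend_ord (k : nat) (f : 'I_k -> nat) (a : nat) : nat :=
  oapp f 0 (insub a).

Lemma extend_ordE (k : nat) (f : 'I_k -> nat) (a : nat) (lt_ak : a < k) :
  extend_ord f a = f (Ordinal lt_ak).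
Proof. by rewrite -[a]/(val (Ordinal lt_ak)) /extend_ord valK. Qed.

Definition word (n : nat) (s : {perm 'I_n}) : nat -> nat :=
  extend_ord (fun i => val (s i)).

Section PermutationWord.

Variables (n : nat) (s : {perm 'I_n}).

Lemma word_ord (i : 'I_n) : word s i = s i.
Proof. by case: i => i lt_in; rewrite /word (extend_ordE _ lt_in). Qed.

Lemma word_range x : x < n -> word s x < n.
Proof. by move=> lt_xn; rewrite -[x]/(val (Ordinal lt_xn)) word_ord. Qed.

Lemma word_inj x y : x < n -> y < n -> word s x = word s y -> x = y.
Proof.
move=> lt_xn lt_yn; rewrite -[x]/(val (Ordinal lt_xn)) -[y]/(val (Ordinal lt_yn)).
by rewrite !word_ord => /val_inj/perm_inj ->.
Qed.

Lemma word_onto v : v < n -> exists2 j, j < n & word s j = v.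
Proof.
move=> lt_vn; exists ((s^-1)%g (Ordinal lt_vn)) => //.
by rewrite word_ord permKV.
Qed.

Lemma containsP (p : seq nat) : reflect (occurs n (word s) p) (contains s p).
Proof.
apply: (iffP existsP) => [[f /forallP f_occ] | [f [f_lt f_incr f_ord]]].
  exists (extend_ord (fun a => val (f a))); split.
  - by move=> a lt_a; rewrite (extend_ordE _ lt_a) ltn_ord.
  - move=> a b lt_ab lt_b; have lt_a := ltn_trans lt_ab lt_b.
    rewrite (extend_ordE _ lt_a) (extend_ordE _ lt_b).
    have /forallP/(_ (Ordinal lt_b))/andP[/implyP f_incr _] := f_occ (Ordinal lt_a).
    exact: f_incr.
  - move=> a b lt_a lt_b; rewrite (extend_ordE _ lt_a) (extend_ordE _ lt_b) !word_ord.
    by have /forallP/(_ (Ordinal lt_b))/andP[_ /eqP] := f_occ (Ordinal lt_a).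
exists [ffun a : 'I_(size p) => Sub (f a) (f_lt a (ltn_ord a)) : 'I_n]; apply/forallP => a.
apply/forallP => b; rewrite !ffunE; apply/andP; split.
  by apply/implyP => lt_ab; apply: f_incr.
by rewrite -!word_ord /= f_ord.
Qed.

Lemma fishburnP : reflect (fishburn_word n (word s)) (fishburn s).
Proof.
apply: (iffP negP) => [no_viol i j lt_ij lt_jn /andP[lt_ji lt_ii1] w_i | fish].
  have lt_in := ltn_trans lt_ij lt_jn; have lt_i1n := leq_ltn_trans lt_ij lt_jn.
  apply: no_viol; apply/existsP; exists (Ordinal lt_in); apply/existsP.
  exists (Ordinal lt_jn); apply/existsP; exists (Ordinal lt_i1n).
  rewrite -!word_ord /= lt_ij lt_ji lt_ii1 eqxx /=.
  by apply/eqP; rewrite -w_i; exact: esym (word_ord _).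
case/existsP => i /existsP[j /existsP[i1 /and5P[lt_ij /eqP i1_E lt_ji lt_ii1 /eqP w_i]]].
apply: (fish i j lt_ij (ltn_ord j)); last by rewrite !word_ord.
by rewrite -i1_E !word_ord lt_ji.
Qed.

End PermutationWord.

Theorem mainTheorem2 :
  forall sigma : seq nat,
    sigma \in [:: [:: 1; 3; 2]; [:: 2; 1; 3]; [:: 3; 1; 2]; [:: 3; 1; 4; 2]] ->
  forall n : nat,
    F_set n [:: [:: 3; 2; 1]; sigma] = S_set n [:: [:: 2; 3; 1]; [:: 3; 2; 1]; sigma].
Proof.
move=> sigma sigma_in n; apply/setP => s; rewrite !inE /= /avoids.
case: (containsP s [:: 3; 2; 1]) => [_|avoid321]; first by rewrite !andbF.
case: (containsP s sigma) => [_|avoid_sigma]; first by rewrite !andbF.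
case: (containsP s [:: 2; 3; 1]) => [occ231|avoid231_s] /=; rewrite !andbT.
  apply/negbTE/negP => /fishburnP fish.
  have avoid3142 : ~ occurs n (word s) [:: 3; 1; 4; 2].
    by move/(occurs_sigma_of_3142 sigma_in).
  exact: (avoid231 (@word_range _ s) (@word_inj _ s) (@word_onto _ s)
            avoid321 avoid3142 fish occ231).
exact/fishburnP/fishburn_of_avoid231.
Qed.
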